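(* Let $\alpha\ge\aleph_0$ be a cardinal, let $X$ be a commutative topological $\alpha$-generated algebra over $\mathbb{K}$ which is first-countable, and let $M\subset X$. Then $M$ is $\alpha$-infinitely strongly $\alpha$-dense-algebrable if and only if $M$ is strongly $\alpha$-dense-algebrable.
   Context: Algebras are associative linear algebras over $\mathbb{K}$ ($\mathbb{R}$ or $\mathbb{C}$); a topological algebra has continuous sum, product and scalar multiplication. An algebra is $\alpha$-generated if $\alpha$ is the smallest cardinality of a subset generating it as an algebra. $\langle S\rangle$ is the subalgebra generated by $S$. With $\mathbb{P}_n$ the polynomials in $n$ variables without constant term, $S$ is a set of free generators (SFG) if $P(x_1,\dots,x_n)\neq0$ for every $n$, every non-zero $P\in\mathbb{P}_n$ and all pairwise distinct $x_1,\dots,x_n\in S$. An $\alpha$-generated free subalgebra is $\langle F\rangle$ with $F$ an SFG of cardinality $\alpha$. $M$ is strongly $\alpha$-dense-algebrable if $M\cup\{0\}$ contains a dense $\alpha$-generated free subalgebra of $X$; $M$ is $\alpha$-infinitely strongly $\alpha$-dense-algebrable if there is a family $\{Y_\kappa\}_{\kappa<\alpha}$ of dense $\alpha$-generated free subalgebras of $X$ with $Y_\kappa\subset M\cup\{0\}$ and $Y_{\kappa_1}\cap Y_{\kappa_2}=\{0\}$ for $\kappa_1\neq\kappa_2$. *)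

From HB Require Import structures.
From mathcomp Require Import all_boot all_order all_algebra.
From mathcomp Require Import mpoly.
From mathcomp Require Import all_classical all_reals all_analysis.
From mathcomp Require complex.
Import complex.

Set Implicit Arguments.
Unset Strict Implicit.
Unset Printing Implicit Defensive.

Import Order.TTheory GRing.Theory Num.Theory.
Local Open Scope classical_set_scope.
Local Open Scope ring_scope.

Definition scalarK (R : realType) (b : bool) : numFieldType :=
  if b then (R : numFieldType) else (complex R : numFieldType).

Section Alg.
Variables (K : numFieldType) (X : topologicalLmodType K).
Variable mul : X -> X -> X.

(* (X, +, *:, mul) is a commutative associative K-algebra (not necessarily
   unital) whose product is (jointly) continuous; continuity of + and *:
   is part of the topologicalLmodType structure. *)
Definition comm_top_algebra : Prop :=
  [/\ (forall x y z, mul x (mul y z) = mul (mul x y) z),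
      (forall x y, mul x y = mul y x),
      (forall (a : K) x y z, mul (a *: x + y) z = a *: mul x z + mul y z)
    & continuous (fun p : X * X => mul p.1 p.2)].

Definition first_countable : Prop :=
  forall x : X, exists B : nat -> set X,
    (forall k, nbhs x (B k)) /\
    (forall U, nbhs x U -> exists k, B k `<=` U).

Definition subalgebra (Y : set X) : Prop :=
  [/\ Y 0,
      (forall x y, Y x -> Y y -> Y (x + y)),
      (forall (a : K) x, Y x -> Y (a *: x))
    & (forall x y, Y x -> Y y -> Y (mul x y))].

Definition gen (S : set X) : set X :=
  \bigcap_(Y in [set Y | subalgebra Y /\ S `<=` Y]) Y.

Definition nprod (s : seq X) : X :=
  if s is a :: s' then foldl mul a s' else 0.

Definition mono_eval n (m : mpoly.multinom n) (x : 'I_n -> X) : X :=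
  nprod (flatten [seq nseq (mpoly.fun_of_multinom m i) (x i) | i <- enum 'I_n]).

Definition peval n (P : mpoly.mpoly n K) (x : 'I_n -> X) : X :=
  \sum_(m <- mpoly.msupp P) mpoly.mcoeff m P *: mono_eval m x.

Definition no_const n (P : mpoly.mpoly n K) : Prop :=
  mpoly.mcoeff (@mpoly.mnm0 n) P = 0.

Definition SFG (S : set X) : Prop :=
  forall (n : nat) (P : mpoly.mpoly n K) (x : 'I_n -> X),
    no_const P -> P != 0 -> injective x -> (forall i, S (x i)) ->
    peval P x != 0.

Variable I : Type. (* a type of cardinality alpha *)

Definition alpha_generated : Prop :=
  (exists S : set X, (S #= [set: I])%card /\ gen S = [set: X]) /\
  (forall S : set X, gen S = [set: X] -> ([set: I] #<= S)%card).

Definition alpha_free_subalgebra (Y : set X) : Prop :=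
  exists F : set X, SFG F /\ (F #= [set: I])%card /\ Y = gen F.

Definition strongly_dense_algebrable (M : set X) : Prop :=
  exists Y : set X, alpha_free_subalgebra Y /\ dense Y /\ Y `<=` M `|` [set 0].

Definition infinitely_strongly_dense_algebrable (M : set X) : Prop :=
  exists Yk : I -> set X,
    (forall k, alpha_free_subalgebra (Yk k) /\ dense (Yk k) /\
               Yk k `<=` M `|` [set 0]) /\
    (forall k1 k2, k1 <> k2 -> Yk k1 `&` Yk k2 = [set 0]).

End Alg.

From HB Require Import structures.
From mathcomp Require Import all_boot all_order all_algebra.
From mathcomp Require Import mpoly.
From mathcomp Require Import all_classical all_reals all_analysis.

Set Implicit Arguments.
Unset Strict Implicit.
Unset Printing Implicit Defensive.

Import Order.TTheory GRing.Theory Num.Theory.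
Local Open Scope classical_set_scope.
Local Open Scope ring_scope.
Local Open Scope card_scope.

(* Only the direct implication needs proof.  Let F be a free generating set of
   cardinality alpha with <F> dense and contained in M ∪ {0}.  Index F
   bijectively as e(l, i), (l, i) ∈ ℕ × alpha, fix an injection π of
   alpha × alpha × ℕ into alpha, and let F_k (k < alpha) consist of the
   elements e(l, i) + t e(l+1, π(k, i, n)), where t ≠ 0 is so small that the
   second term lies in the n-th neighbourhood of 0 of a countable base.
   Substituting these elements into a polynomial is a change of variables
   that is triangular with respect to the level l, hence injective, so the
   union of all F_k is still free: each F_k is free and <F_k> ∩ <F_k'> = {0}
   for k ≠ k'.  Letting n grow puts F into the closure of <F_k>, which is a
   subalgebra by continuity of the operations, so <F_k> is dense.  The
   cardinal arithmetic rests on alpha × alpha ≅ alpha (Zorn's lemma). *)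

(** * Cardinal arithmetic *)

Lemma choice_on T U (u0 : U) (A : set T) (R : T -> U -> Prop) :
  (forall a, A a -> exists b, R a b) -> exists f : T -> U, forall a, A a -> R a (f a).
Proof.
move=> AR; suff [f Hf] : {f : T -> U & forall a, A a -> R a (f a)} by exists f.
apply: (@choice _ _ (fun a b => A a -> R a b)) => a.
by have [/AR[b Rab]|nAa] := pselect (A a); [exists b | exists u0].
Qed.

Lemma card_le_inj T U (A : set T) (B : set U) (f : T -> U) :
  set_fun A B f -> set_inj A f -> A #<= B.
Proof.
move=> fAB finj; have [->|/set0P[a _]] := eqVneq A set0; first exact: card_ge0.
elim/Ppointed: U B f fAB finj => U B f fAB finj; first by have := no (f a).
by apply/pcard_leP/injfunPex; exists f.
Qed.

Lemma card_le_fun T U (u0 : U) (A : set T) (B : set U) :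
  A #<= B -> exists2 f : T -> U, set_fun A B f & set_inj A f.
Proof.
elim/Ppointed: U u0 B => U u0 B; first by have := no u0.
by move=> /pcard_leP/injfunPex.
Qed.

Lemma card_eq_bij T U (u0 : U) (A : set T) (B : set U) :
  A #= B -> exists f : T -> U, set_bij A B f.
Proof.
elim/Ppointed: U u0 B => U u0 B; first by have := no u0.
exact/card_set_bijP.
Qed.

Lemma card_le_setX T T' U U' (A : set T) (B : set T') (A' : set U) (B' : set U') :
  A #<= A' -> B #<= B' -> A `*` B #<= A' `*` B'.
Proof.
move=> AA' BB'.
have [A'0|/set0P[a' _]] := eqVneq A' set0.
  by move: AA'; rewrite A'0 => /card_le0P ->; rewrite set0X; exact: card_ge0.
have [B'0|/set0P[b' _]] := eqVneq B' set0.
  by move: BB'; rewrite B'0 => /card_le0P ->; rewrite setX0; exact: card_ge0.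
have [f fA finj] := card_le_fun a' AA'; have [g gB ginj] := card_le_fun b' BB'.
apply: (@card_le_inj _ _ _ _ (fun p => (f p.1, g p.2))).
  by move=> p [/fA ? /gB ?].
move=> [a b] [c d] /set_mem[Aa Bb] /set_mem[Ac Bd] [fac gbd].
by rewrite (finj a c (mem_set Aa) (mem_set Ac) fac) (ginj b d (mem_set Bb) (mem_set Bd) gbd).
Qed.

Lemma card_setU_le T U (A B : set T) (D : set U) (d0 d1 : U) :
  D d0 -> D d1 -> d0 <> d1 -> D `*` D #<= D ->
  A #<= D -> B #<= D -> A `|` B #<= D.
Proof.
move=> Dd0 Dd1 d01 DD_D /(card_le_fun d0)[fA fAD fAinj].
move=> /(card_le_fun d0)[fB fBD fBinj]; apply: card_le_trans DD_D.
pose tag x := if pselect (A x) then (fA x, d0) else (fB x, d1).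
apply: (@card_le_inj _ _ _ _ tag).
  move=> x ABx; rewrite /tag; case: pselect => Ax; split => //=.
    exact: fAD.
  by apply: fBD; case: ABx.
move=> x y /set_mem ABx /set_mem ABy; rewrite /tag.
case: pselect => Ax; case: pselect => Ay [] //.
- by move=> /(fAinj x y (mem_set Ax) (mem_set Ay)).
- by move=> _ /esym/d01.
have [Bx By] : B x /\ B y by split; [case: ABx | case: ABy].
by move=> /(fBinj x y (mem_set Bx) (mem_set By)).
Qed.

Lemma bigcup_chain2 T (C : set (set T)) p q : total_on C subset ->
  (\bigcup_(H in C) H) p -> (\bigcup_(H in C) H) q -> exists2 H, C H & H p /\ H q.
Proof.
move=> Ctot [H1 CH1 H1p] [H2 CH2 H2q].
by have [/(_ p H1p) H2p|/(_ q H2q) H1q] := Ctot _ _ CH1 CH2; [exists H2|exists H1].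
Qed.

Lemma card_le_total T U (A : set T) (B : set U) : A #<= B \/ B #<= A.
Proof.
have [->|/set0P[a0 _]] := eqVneq A set0; first by left; exact: card_ge0.
have [->|/set0P[b0 _]] := eqVneq B set0; first by right; exact: card_ge0.
pose partial_bij (H : set (T * U)) := [/\ H `<=` A `*` B,
  forall p q, H p -> H q -> p.1 = q.1 -> p = q &
  forall p q, H p -> H q -> p.2 = q.2 -> p = q].
have [H [[HAB Hfun Hinj] Hmax]] :
    exists H, partial_bij H /\ forall H', H `<` H' -> ~ partial_bij H'.
  apply: Zorn_bigcup => C CP Ctot; split.
  - by move=> p [H /CP[HAB _ _] /HAB].
  - move=> p q Hp /(bigcup_chain2 Ctot Hp)[H /CP[_ Hfun _] [Hp' Hq]].
    exact: Hfun.
  - move=> p q Hp /(bigcup_chain2 Ctot Hp)[H /CP[_ _ Hinj] [Hp' Hq]].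
    exact: Hinj.
have [domA|/existsNP[a /not_implyP[Aa /forallNP Ha]]] :=
  pselect (forall a, A a -> exists b, H (a, b)).
  left; have [f Hf] := choice_on b0 domA.
  apply: (@card_le_inj _ _ _ _ f) => [a /Hf /HAB[]//|a a' /set_mem/Hf Ha].
  by move=> /set_mem/Hf Ha' /(Hinj _ _ Ha Ha')[].
have [domB|/existsNP[b /not_implyP[Bb /forallNP Hb]]] :=
  pselect (forall b, B b -> exists a, H (a, b)).
  right; have [g Hg] := choice_on a0 domB.
  apply: (@card_le_inj _ _ _ _ g) => [b /Hg /HAB[]//|b b' /set_mem/Hg Hb].
  by move=> /set_mem/Hg Hb' /(Hfun _ _ Hb Hb')[].
exfalso; apply: (Hmax (H `|` [set (a, b)])).
  by split=> [p Hp|/(_ (a, b))]; [left|case/(_ _)/Ha => //; right].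
split.
- by move=> p [/HAB//|->]; split.
- move=> p q [Hp|->] [Hq|->] //= pq; first exact: Hfun.
    by case: p Hp pq => a1 b1 /= + E; rewrite E => /Ha.
  by case: q Hq pq => a1 b1 /= + E; rewrite -E => /Ha.
- move=> p q [Hp|->] [Hq|->] //= pq; first exact: Hinj.
    by case: p Hp pq => a1 b1 /= + E; rewrite E => /Hb.
  by case: q Hq pq => a1 b1 /= + E; rewrite -E => /Hb.
Qed.

Definition new_pairs T (A B : set T) := (A `|` B) `*` (A `|` B) `\` A `*` A.

Lemma card_new_pairs T (A B : set T) (x0 x1 : T) :
  A x0 -> A x1 -> x0 <> x1 -> A `*` A #<= A -> A `&` B = set0 -> A #= B ->
  new_pairs A B #= B.
Proof.
move=> Ax0 Ax1 x01 AA_A AB0 /card_eqPle[A_B B_A].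
have AB_A : A `|` B #<= A := card_setU_le Ax0 Ax1 x01 AA_A (card_lexx A) B_A.
apply: Cantor_Bernstein.
  apply: card_le_trans (subset_card_le (@subDsetl _ _ _)) _.
  apply: card_le_trans (card_le_setX AB_A AB_A) _.
  exact: card_le_trans AA_A A_B.
apply: (@card_le_inj _ _ _ _ (fun b => (b, b))); last by move=> b b' _ _ [].
move=> b Bb; split; [by split; right | move=> [Ab _]].
by have : (A `&` B) b by []; rewrite AB0.
Qed.

Section SquareGraph.
Variable T : Type.
Implicit Types G : set (T * T * T).

Definition sq_range G : set T := [set z | exists a b, G (a, b, z)].

Definition square_graph G := [/\
  forall a b y y', G (a, b, y) -> G (a, b, y') -> y = y',
  forall a b a' b' y, G (a, b, y) -> G (a', b', y) -> (a, b) = (a', b'),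
  forall a b y, G (a, b, y) -> sq_range G a /\ sq_range G b &
  forall a b, sq_range G a -> sq_range G b -> exists y, G (a, b, y)].

Lemma square_graph_bigcup (C : set (set (T * T * T))) :
  (forall G, C G -> square_graph G) -> total_on C subset ->
  square_graph (\bigcup_(G in C) G).
Proof.
move=> Csq Ctot.
have range_sup G z : C G -> sq_range G z -> sq_range (\bigcup_(G in C) G) z.
  by move=> CG [a [b Gz]]; exists a, b, G.
split.
- move=> a b y y' Gy /(bigcup_chain2 Ctot Gy)[G /Csq[Gfun _ _ _] [Gy' Gy'']].
  exact: Gfun Gy' Gy''.
- move=> a b a' b' y Gy /(bigcup_chain2 Ctot Gy)[G /Csq[_ Ginj _ _] [Gy' Gy'']].
  exact: Ginj Gy' Gy''.
- move=> a b y [G CG Gy]; have [_ _ Grange _] := Csq _ CG.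
  by have [Ga Gb] := Grange _ _ _ Gy; split; apply: range_sup CG _.
- move=> a b [a1 [b1 Ga]] [a2 [b2 Gb]].
  have [G CG [Ga' Gb']] := bigcup_chain2 Ctot Ga Gb.
  have [_ _ _ Gtot] := Csq _ CG.
  have [y Gy] := Gtot a b (ex_intro _ a1 (ex_intro _ b1 Ga')) (ex_intro _ a2 (ex_intro _ b2 Gb')).
  by exists y, G.
Qed.

Lemma square_graph_bij G (t0 : T) : square_graph G ->
  exists f, set_bij (sq_range G `*` sq_range G) (sq_range G) f.
Proof.
move=> [Gfun Ginj Grange Gtot].
have [f Gf] : exists f : T * T -> T,
    forall p, (sq_range G `*` sq_range G) p -> G (p.1, p.2, f p).
  apply: (@choice_on _ _ t0 _ (fun p y => G (p.1, p.2, y))).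
  by move=> [a b] [/= Aa Ab]; exact: Gtot.
exists f; split.
- by move=> p /Gf Gp; exists p.1, p.2.
- move=> [a b] [a' b'] /set_mem/Gf Gp /set_mem/Gf Gp' fE.
  by apply: Ginj Gp _; rewrite fE.
- move=> z [a [b Gz]]; have [Aa Ab] := Grange _ _ _ Gz.
  by exists (a, b) => //; exact: Gfun (Gf (a, b) (conj Aa Ab)) Gz.
Qed.

Lemma square_graph_setU G (B : set T) (kappa : T * T -> T) : square_graph G ->
  sq_range G `&` B = set0 ->
  set_bij (new_pairs (sq_range G) B) B kappa ->
  square_graph (G `|` [set (p, kappa p) | p in new_pairs (sq_range G) B]).
Proof.
set A := sq_range G.
move=> [Gfun Ginj Grange Gtot] AB0 [kC kinj ksurj]; set G' := _ `|` _.
have BA b : B b -> ~ A b by move=> Bb Ab; have : (A `&` B) b by []; rewrite AB0.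
have rangeG' : sq_range G' = A `|` B.
  apply/seteqP; split => [z [a [b [Gz|[p Cp [pE <-]]]]]|z [Az|/ksurj[p Cp <-]]].
  - by left; exists a, b.
  - by right; apply: kC.
  - by case: Az => a [b Gz]; exists a, b; left.
  - by case: p Cp => a b Cp; exists a, b; right; exists (a, b).
split; rewrite ?rangeG'.
- move=> a b y y' [Gy|[p Cp [pE <-]]] [Gy'|[q Cq [qE <-]]].
  + exact: Gfun Gy Gy'.
  + by exfalso; case: Cq => _; apply; rewrite qE; exact: Grange Gy.
  + by exfalso; case: Cp => _; apply; rewrite pE; exact: Grange Gy'.
  + by rewrite pE qE.
- move=> a b a' b' y [Gy|[p Cp [pE <-]]] [Gy'|[q Cq [qE kE]]].
  + exact: Ginj Gy Gy'.
  + by exfalso; apply: (BA _ (kC _ Cq)); rewrite kE; exists a, b.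
  + by exfalso; apply: (BA _ (kC _ Cp)); exists a', b'.
  + by rewrite -pE -qE; apply: kinj; rewrite ?inE.
- move=> a b y [Gy|[p [ABp _] [pE _]]].
    by have [Aa Ab] := Grange _ _ _ Gy; split; left.
  by move: ABp; rewrite pE.
- move=> a b ABa ABb; have [[Aa Ab]|nAab] := pselect (A a /\ A b).
    by have [y Gy] := Gtot a b Aa Ab; exists y; left.
  by exists (kappa (a, b)); right; exists (a, b).
Qed.

Lemma square_graph_extend G (x0 x1 : T) : square_graph G ->
  sq_range G x0 -> sq_range G x1 -> x0 <> x1 ->
  sq_range G #<= ~` sq_range G -> exists2 G', square_graph G' & G `<` G'.
Proof.
move=> Gsq Ax0 Ax1 x01; set A := sq_range G => /(card_le_fun x0)[h hA hinj].
have [f [fA finj _]] := square_graph_bij x0 Gsq.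
pose B := h @` A.
have AB0 : A `&` B = set0.
  by apply/seteqP; split => // z [Az [x Ax hxz]]; apply: (hA x Ax); rewrite hxz.
have AB : A #= B by rewrite card_eq_sym; exact: inj_card_eq hinj.
have [kappa kbij] := card_eq_bij x0
  (card_new_pairs Ax0 Ax1 x01 (card_le_inj fA finj) AB0 AB).
have [kC _ _] := kbij.
eexists; first exact: square_graph_setU Gsq AB0 kbij.
split=> [q Gq|G'G]; first by left.
have Chh : new_pairs A B (h x0, h x0).
  by split; [split; right; exists x0 | move=> [Ahx _]; exact: hA x0 Ax0 Ahx].
have /G'G Ghh : (G `|` [set (p, kappa p) | p in new_pairs A B])
    (h x0, h x0, kappa (h x0, h x0)) by right; exists (h x0, h x0).
have [x Ax hx] := kC _ Chh.
by apply: (hA x Ax); rewrite hx; exists (h x0), (h x0).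
Qed.

Lemma square_graph_nat (io : nat -> T) : injective io ->
  exists2 G0, square_graph G0 & forall n, sq_range G0 (io n).
Proof.
move=> ioinj; have [nu [_ nuinj nusurj]] := card_eq_bij 0%N card_nat2.
pose G0 : set (T * T * T) := [set (io p.1, io p.2, io (nu p)) | p in [set: nat * nat]].
exists G0; last by move=> n; have [p _ <-] := nusurj n I; exists (io p.1), (io p.2), p.
split.
- by move=> a b y y' [p _ [<- <- <-]] [q _ [/ioinj pq1 /ioinj pq2 <-]];
    congr (io (nu _)); case: p q pq1 pq2 => [? ?] [? ?] /= -> ->.
- move=> a b a' b' y [p _ [<- <- <-]] [q _ [<- <- /ioinj/nuinj]].
  by move=> /(_ (mem_set I) (mem_set I)) ->.
- move=> a b y [[m n] _ [<- <- _]].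
  have [p _ <-] := nusurj m I; have [q _ <-] := nusurj n I.
  by split; [exists (io p.1), (io p.2), p | exists (io q.1), (io q.2), q].
- move=> _ _ [a [b [p _ [_ _ <-]]]] [a' [b' [q _ [_ _ <-]]]].
  by exists (io (nu (nu p, nu q))), (nu p, nu q).
Qed.

Lemma square_graph_maximal G0 : square_graph G0 ->
  exists G, [/\ square_graph G, G0 `<=` G & forall G', G `<` G' -> ~ square_graph G'].
Proof.
move=> G0sq.
(* The alternative [G = set0] makes the union of the empty chain admissible. *)
pose P G := square_graph G /\ (G = set0 \/ G0 `<=` G).
have [G [[Gsq G0G] Gmax]] : exists G, P G /\ forall G', G `<` G' -> ~ P G'.
  apply: Zorn_bigcup => C CP Ctot; split.
    by apply: square_graph_bigcup Ctot => G /CP[].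
  have [[G CG G0G]|noG0] := pselect (exists2 G, C G & G0 `<=` G).
    by right => q /G0G Gq; exists G.
  left; apply/seteqP; split => // q [G CG Gq].
  have [_ [G_0|G0G]] := CP _ CG; first by rewrite G_0 in Gq.
  by case: noG0; exists G.
have {}G0G : G0 `<=` G.
  case: G0G => // G_0; have [->//|/set0P[q G0q]] := eqVneq G0 set0.
  case: (Gmax G0); last by split => //; right.
  by rewrite G_0; split => // /(_ q G0q).
exists G; split => // G' GG' G'sq; apply: (Gmax G' GG'); split => //; right.
by apply: subset_trans G0G _; case: GG'.
Qed.

End SquareGraph.

Lemma infinite_card_setX (T : Type) :
  infinite_set [set: T] -> [set: T * T] #<= [set: T].
Proof.
move=> Tinf; have [t0 _] := infinite_setN0 Tinf.
have [io _ ioinj] := card_le_fun t0 ((infiniteP _).1 Tinf).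
have {}ioinj : injective io by move=> m n; apply: ioinj; rewrite in_setT.
have [G0 G0sq G0io] := square_graph_nat ioinj.
have [G [Gsq G0G Gmax]] := square_graph_maximal G0sq.
set A := sq_range G.
have Aio n : A (io n) by have [a [b G0n]] := G0io n; exists a, b; apply: G0G.
have io01 : io 0%N <> io 1%N by move/ioinj.
have [f [fA finj _]] := square_graph_bij t0 Gsq.
have AA_A : A `*` A #<= A := card_le_inj fA finj.
have [CA|AC] := card_le_total (~` A) A; last first.
  by have [G' /[swap] /Gmax] := square_graph_extend Gsq (Aio 0%N) (Aio 1%N) io01 AC.
have TA : [set: T] #<= A.
  by rewrite -(setvU A); apply: card_setU_le (Aio 0%N) (Aio 1%N) io01 AA_A CA _.
rewrite -setXTT; apply: card_le_trans (card_le_setX TA TA) _.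
exact: card_le_trans AA_A (card_leT A).
Qed.

Lemma infinite_card_le_setX T U V : infinite_set [set: T] ->
  [set: U] #<= [set: T] -> [set: V] #<= [set: T] -> [set: U * V] #<= [set: T].
Proof.
move=> Tinf UT VT; rewrite -setXTT.
apply: card_le_trans (card_le_setX UT VT) _.
by rewrite setXTT; exact: infinite_card_setX.
Qed.

Lemma infinite_card_natX T : infinite_set [set: T] -> [set: nat * T] #= [set: T].
Proof.
move=> Tinf; apply: Cantor_Bernstein.
  exact: infinite_card_le_setX Tinf ((infiniteP _).1 Tinf) (card_lexx _).
by apply: (@card_le_inj _ _ _ _ (pair 0%N)) => // t t' _ _ [].
Qed.

(** * Closures and neighbourhoods *)

Lemma closure_continuous2 (S T U : topologicalType) (f : S * T -> U)
    (A : set S) (B : set T) (C : set U) :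
  continuous f -> (forall a b, A a -> B b -> C (f (a, b))) ->
  forall a b, closure A a -> closure B b -> closure C (f (a, b)).
Proof.
move=> fc fABC a b Aa Bb V /fc[[V1 V2] /= [V1a V2b] V12].
have [a' [Aa' V1a']] := Aa _ V1a; have [b' [Bb' V2b']] := Bb _ V2b.
by exists (f (a', b')); split; [apply: fABC | apply: (V12 (a', b'))].
Qed.

Lemma dense_closure (T : topologicalType) (Y Z : set T) :
  dense Y -> Y `<=` closure Z -> dense Z.
Proof.
move=> Ydense YZ O O0 Oopen; have [y [Oy Yy]] := Ydense O O0 Oopen.
by have [z [Zz Oz]] := YZ y Yy O (open_nbhs_nbhs (conj Oopen Oy)); exists z.
Qed.

Lemma nbhs0_scale_neq0 (K : numFieldType) (X : topologicalLmodType K) (V : set X) (z : X) :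
  nbhs 0 V -> exists t : K, t != 0 /\ V (t *: z).
Proof.
move=> V0; have /= := @scale_continuous K X (0, z) V; rewrite scale0r => /(_ V0).
move=> [[V1 V2] /= [V10 V2z] V12].
have [e e0 eV1] := (nbhs_ballP _ _).1 V10.
exists (e / 2); split; first by rewrite mulf_neq0 ?invr_eq0 ?pnatr_eq0 ?gt_eqF.
apply: (V12 (e / 2, z)); split; last exact: nbhs_singleton V2z.
apply: eV1; rewrite /ball /= sub0r normrN ger0_norm ?divr_ge0 ?ler0n ?ltW //.
by rewrite ltr_pdivrMr ?ltr0n // ltr_pMr // ltr1n.
Qed.

(** * Polynomial evaluation and generated subalgebras *)

Lemma injective_factor (T : eqType) n (x : 'I_n -> T) :
  exists m (v : 'I_m -> T) (g : 'I_n -> 'I_m),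
    [/\ injective v, forall i, v (g i) = x i & forall j, exists i, v j = x i].
Proof.
pose s := undup [seq x i | i <- enum 'I_n].
have xs i : (index (x i) s < size s)%N.
  by rewrite index_mem mem_undup map_f ?mem_enum.
exists (size s), (tnth (in_tuple s)), (fun i => Ordinal (xs i)); split.
- exact/tuple_uniqP/undup_uniq.
- by move=> i; rewrite (tnth_nth (x i)) /= nth_index // -index_mem.
- move=> j; have /mapP[i _ ->] : tnth (in_tuple s) j \in [seq x i | i <- enum 'I_n].
    by rewrite -mem_undup mem_tnth.
  by exists i.
Qed.

Definition cat_fun (T : Type) n1 n2 (x : 'I_n1 -> T) (y : 'I_n2 -> T) :
    'I_(n1 + n2) -> T :=
  fun j => match fintype.split j with inl i => x i | inr i => y i end.

Section CatFun.
Variables (T : Type) (n1 n2 : nat) (x : 'I_n1 -> T) (y : 'I_n2 -> T).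

Lemma cat_fun_lshift i : cat_fun x y (lshift n2 i) = x i.
Proof. by rewrite /cat_fun (unsplitK (inl _ i)). Qed.

Lemma cat_fun_rshift i : cat_fun x y (rshift n1 i) = y i.
Proof. by rewrite /cat_fun (unsplitK (inr _ i)). Qed.

Lemma cat_funP (P : T -> Prop) :
  (forall i, P (x i)) -> (forall i, P (y i)) -> forall j, P (cat_fun x y j).
Proof. by move=> Px Py j; rewrite /cat_fun; case: fintype.split. Qed.

Lemma cat_fun_inj : injective x -> injective y -> (forall i j, x i <> y j) ->
  injective (cat_fun x y).
Proof.
move=> xinj yinj xy j1 j2; rewrite -(splitK j1) -(splitK j2) /cat_fun !unsplitK.
case: (fintype.split j1) => a; case: (fintype.split j2) => b //.
- by move/xinj ->.
- by move/xy.
- by move/esym/xy.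
- by move/yinj ->.
Qed.

End CatFun.

Lemma mmap_comp_mpoly (R S : comNzRingType) n k (f : {rmorphism R -> S})
    (h : 'I_k -> S) (p : {mpoly R[n]}) (lq : n.-tuple {mpoly R[k]}) :
  mmap f h (p \mPo lq) = mmap f (fun i => mmap f h (tnth lq i)) p.
Proof.
rewrite comp_mpolyEX raddf_sum /mmap /=; apply: eq_bigr => m _.
rewrite mmapZ comp_mpolyX rmorph_prod /mmap1; congr (_ * _).
by apply: eq_bigr => i _; rewrite rmorphXn.
Qed.

Lemma comp_mpolyA (R : comNzRingType) n k j (p : {mpoly R[n]})
    (lq : n.-tuple {mpoly R[k]}) (lr : k.-tuple {mpoly R[j]}) :
  (p \mPo lq) \mPo lr = p \mPo [tuple tnth lq i \mPo lr | i < n].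
Proof.
rewrite {1}/comp_mpoly mmap_comp_mpoly /comp_mpoly; congr mmap.
by apply: boolp.funext => i; rewrite tnth_mktuple.
Qed.

Section CommutativeAlgebra.
Variables (K : numFieldType) (X : topologicalLmodType K) (mul : X -> X -> X).
Hypothesis mulA : forall x y z, mul x (mul y z) = mul (mul x y) z.
Hypothesis mulC : forall x y, mul x y = mul y x.
Hypothesis mulL : forall (a : K) x y z, mul (a *: x + y) z = a *: mul x z + mul y z.

Lemma mulDl x y z : mul (x + y) z = mul x z + mul y z.
Proof. by have := mulL 1 x y z; rewrite !scale1r. Qed.

Lemma mul0l z : mul 0 z = 0.
Proof. by apply: (addrI (mul 0 z)); rewrite -mulDl !addr0. Qed.

Lemma mulZl a x z : mul (a *: x) z = a *: mul x z.
Proof. by rewrite -[a *: x]addr0 mulL mul0l addr0. Qed.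

Lemma mulDr x y z : mul z (x + y) = mul z x + mul z y.
Proof. by rewrite mulC mulDl !(mulC z). Qed.

Lemma mulZr a x z : mul z (a *: x) = a *: mul z x.
Proof. by rewrite mulC mulZl mulC. Qed.

(* Polynomials are evaluated through the ring morphism [mmap] into the
   unitization [K * X] of the non-unital algebra [X]. *)
Definition unitization := (K * X)%type.
Local Notation U := unitization.
HB.instance Definition _ := GRing.Zmodule.on U.

Definition unit_mul (u v : U) : U := (u.1 * v.1, u.1 *: v.2 + v.1 *: u.2 + mul u.2 v.2).

Lemma unit_mulA : associative unit_mul.
Proof.
move=> [a x] [b y] [c z]; rewrite /unit_mul /=; congr pair; first by rewrite mulrA.
rewrite !scalerDr !mulDl !mulDr !mulZl !mulZr !scalerA !mulA.
rewrite [c * a]mulrC [c * b]mulrC -!addrA; congr (_ + _).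
by rewrite (addrCA (c *: mul x y) (a *: mul y z)) (addrCA (c *: mul x y) (b *: mul x z))
  (addrCA (a *: mul y z)).
Qed.

Lemma unit_mulC : commutative unit_mul.
Proof. by move=> [a x] [b y]; rewrite /unit_mul /= mulrC mulC (addrC (a *: y)). Qed.

Lemma unit_mul1 : left_id (1, 0) unit_mul.
Proof. by move=> [a x]; rewrite /unit_mul /= mul1r scale1r scaler0 mul0l !addr0. Qed.

Lemma unit_mulDl : left_distributive unit_mul +%R.
Proof.
move=> [a x] [b y] [c z]; rewrite /unit_mul /=; congr pair; first by rewrite mulrDl.
rewrite scalerDl scalerDr mulDl -!addrA; congr (_ + _).
by rewrite addrCA; congr (_ + _); rewrite (addrCA (mul x z)) (addrCA (mul x z)).
Qed.

Lemma unit_one_neq0 : ((1, 0) : U) != 0.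
Proof. by apply/negP => /eqP [] /eqP; rewrite oner_eq0. Qed.

HB.instance Definition _ := GRing.Zmodule_isComNzRing.Build U
  unit_mulA unit_mulC unit_mul1 unit_mulDl unit_one_neq0.

Lemma unit_mulE (a : K) x b y :
  ((a, x) : U) * (b, y) = (a * b, a *: y + b *: x + mul x y).
Proof. by []. Qed.

Definition unit_scalar (c : K) : U := (c, 0).

Lemma unit_scalar_is_zmod_morphism : zmod_morphism unit_scalar.
Proof. by move=> a b; rewrite /unit_scalar; congr pair; rewrite subrr. Qed.

Lemma unit_scalar_is_monoid_morphism : monoid_morphism unit_scalar.
Proof. by split=> // a b; rewrite /unit_scalar unit_mulE !scaler0 mul0l !addr0. Qed.

HB.instance Definition _ := GRing.isZmodMorphism.Build K U unit_scalar
  unit_scalar_is_zmod_morphism.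
HB.instance Definition _ := GRing.isMonoidMorphism.Build K U unit_scalar
  unit_scalar_is_monoid_morphism.

Definition unit_vec n (x : 'I_n -> X) : 'I_n -> U := fun i => (0, x i).

Lemma foldl_mul a b s : foldl mul (mul a b) s = mul a (foldl mul b s).
Proof. by elim: s b => //= c s IH b; rewrite -mulA IH. Qed.

Lemma unit_prod (s : seq X) :
  \prod_(y <- s) ((0, y) : U) = if s is [::] then 1 else (0, nprod mul s).
Proof.
elim: s => [|a s IH]; first by rewrite big_nil.
rewrite big_cons IH; case: s {IH} => [|b s]; first by rewrite mulr1.
by rewrite unit_mulE mul0r !scale0r !add0r /= foldl_mul.
Qed.

Lemma unit_mmap1 n (x : 'I_n -> X) (m : 'X_{1..n}) :
  mmap1 (unit_vec x) m = ((m == 0%MM)%:R, mono_eval mul m x).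
Proof.
pose s := flatten [seq nseq (m i) (x i) | i <- enum 'I_n].
have -> : mmap1 (unit_vec x) m = \prod_(y <- s) ((0, y) : U).
  rewrite big_flatten big_map /mmap1 big_enum /=.
  by apply: eq_bigr => i _; rewrite big_nseq; elim: (m i) => //= k <-; rewrite exprS.
have size_s : size s = mdeg m.
  rewrite size_flatten /shape -map_comp sumnE big_map big_enum mdegE /=.
  by apply: eq_bigr => i _; rewrite size_nseq.
rewrite unit_prod /mono_eval -/s -mdeg_eq0 -size_s.
by case: s {size_s}.
Qed.

Lemma sum_pair I (r : seq I) (a : I -> K) (y : I -> X) :
  \sum_(i <- r) ((a i, y i) : U) = (\sum_(i <- r) a i, \sum_(i <- r) y i).
Proof. by elim: r => [|i r IH]; rewrite ?big_nil // !big_cons IH. Qed.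

Lemma mmap_unit_vec n (p : {mpoly K[n]}) (x : 'I_n -> X) :
  mmap unit_scalar (unit_vec x) p = (p@_0, peval mul p x).
Proof.
rewrite /mmap; under eq_bigr do
  rewrite unit_mmap1 /unit_scalar unit_mulE scaler0 mul0l !addr0.
rewrite sum_pair; congr pair.
rewrite {3}[p]mpolyE raddf_sum /=.
by apply: eq_bigr => m _; rewrite mcoeffZ mcoeffX.
Qed.

Lemma pevalE n (p : {mpoly K[n]}) (x : 'I_n -> X) :
  peval mul p x = (mmap unit_scalar (unit_vec x) p).2.
Proof. by rewrite mmap_unit_vec. Qed.

Lemma eq_peval n (p : {mpoly K[n]}) (x y : 'I_n -> X) :
  x =1 y -> peval mul p x = peval mul p y.
Proof. by move=> /boolp.funext ->. Qed.

Lemma peval0 n (x : 'I_n -> X) : peval mul 0 x = 0.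
Proof. by rewrite pevalE mmap0. Qed.

Lemma pevalD n (p q : {mpoly K[n]}) (x : 'I_n -> X) :
  peval mul (p + q) x = peval mul p x + peval mul q x.
Proof. by rewrite !pevalE mmapD. Qed.

Lemma pevalB n (p q : {mpoly K[n]}) (x : 'I_n -> X) :
  peval mul (p - q) x = peval mul p x - peval mul q x.
Proof. by rewrite !pevalE mmapD mmapN. Qed.

Lemma pevalZ n c (p : {mpoly K[n]}) (x : 'I_n -> X) :
  peval mul (c *: p) x = c *: peval mul p x.
Proof.
rewrite pevalE mmapZ mmap_unit_vec.
by rewrite /unit_scalar unit_mulE /= scaler0 mul0l !addr0.
Qed.

Lemma pevalXU n (i : 'I_n) (x : 'I_n -> X) : peval mul 'X_i x = x i.
Proof. by rewrite pevalE mmapX mmap1U. Qed.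

Lemma pevalM n (p q : {mpoly K[n]}) (x : 'I_n -> X) :
  no_const p -> no_const q ->
  peval mul (p * q) x = mul (peval mul p x) (peval mul q x).
Proof.
move=> p0 q0; rewrite pevalE.
have -> : mmap unit_scalar (unit_vec x) (p * q) =
    mmap unit_scalar (unit_vec x) p * mmap unit_scalar (unit_vec x) q by exact: rmorphM.
by rewrite !mmap_unit_vec p0 q0 unit_mulE !scale0r !add0r.
Qed.

Lemma peval_comp n k (p : {mpoly K[n]}) (lq : n.-tuple {mpoly K[k]}) (x : 'I_k -> X) :
  (forall i, no_const (tnth lq i)) ->
  peval mul (p \mPo lq) x = peval mul p (fun i => peval mul (tnth lq i) x) /\
  (p \mPo lq)@_0 = p@_0.
Proof.
move=> lq0; suff : mmap unit_scalar (unit_vec x) (p \mPo lq) =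
    mmap unit_scalar (unit_vec (fun i => peval mul (tnth lq i) x)) p.
  by rewrite !mmap_unit_vec => -[-> ->].
rewrite mmap_comp_mpoly; congr mmap; apply: boolp.funext => i.
by rewrite mmap_unit_vec lq0.
Qed.

Lemma peval_at0 n (p : {mpoly K[n]}) : peval mul p (fun _ => 0) = 0.
Proof.
rewrite /peval big1 // => m _; rewrite /mono_eval.
set s := flatten _; suff -> : nprod mul s = 0 by rewrite scaler0.
have s0 y : y \in s -> y = 0 by move=> /flattenP[_ /mapP[i _ ->] /nseqP[]].
case: s s0 => //= y s /(_ y (mem_head _ _)) ->.
by elim: s => //= z s; rewrite mul0l.
Qed.

Definition relabel n k (g : 'I_n -> 'I_k) (p : {mpoly K[n]}) : {mpoly K[k]} :=
  p \mPo [tuple 'X_(g i) | i < n].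

Lemma no_constXU n (i : 'I_n) : no_const ('X_i : {mpoly K[n]}).
Proof. by rewrite /no_const mcoeffX mnm1_eq0. Qed.

Lemma relabel_spec n k (g : 'I_n -> 'I_k) (p : {mpoly K[n]}) (v : 'I_k -> X) :
  peval mul (relabel g p) v = peval mul p (fun i => v (g i)) /\
  (relabel g p)@_0 = p@_0.
Proof.
have X0 i : no_const (tnth ([tuple 'X_(g i) | i < n] : n.-tuple {mpoly K[k]}) i).
  by rewrite tnth_mktuple; exact: no_constXU.
have [-> ->] := peval_comp p v X0.
by split=> //; apply: eq_peval => i; rewrite tnth_mktuple pevalXU.
Qed.

Lemma peval_relabel n k (g : 'I_n -> 'I_k) (p : {mpoly K[n]}) (v : 'I_k -> X) :
  peval mul (relabel g p) v = peval mul p (fun i => v (g i)).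
Proof. by case: (relabel_spec g p v). Qed.

Lemma mcoeff0_relabel n k (g : 'I_n -> 'I_k) (p : {mpoly K[n]}) :
  (relabel g p)@_0 = p@_0.
Proof. by case: (relabel_spec g p (fun _ => 0)). Qed.

Definition poly_values (S : set X) : set X :=
  [set y | exists n (P : {mpoly K[n]}) (x : 'I_n -> X),
     [/\ no_const P, forall i, S (x i) & y = peval mul P x]].

Lemma poly_values_inj S y : poly_values S y ->
  exists n (P : {mpoly K[n]}) (x : 'I_n -> X),
    [/\ no_const P, injective x, forall i, S (x i) & y = peval mul P x].
Proof.
move=> [n [P [x [P0 Sx ->]]]].
have [m [v [g [vinj vg vx]]]] := injective_factor x.
exists m, (relabel g P), v; split => //.
- by rewrite /no_const mcoeff0_relabel.
- by move=> j; have [i ->] := vx j.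
- by rewrite peval_relabel; apply: eq_peval => i; rewrite vg.
Qed.

Lemma sub_poly_values S : S `<=` poly_values S.
Proof.
move=> s Ss; exists 1%N, 'X_ord0, (fun _ => s).
by split=> //; [exact: no_constXU | rewrite pevalXU].
Qed.

Lemma poly_values_subalgebra S : subalgebra mul (poly_values S).
Proof.
have cat_values n1 n2 (x : 'I_n1 -> X) (y : 'I_n2 -> X) (P : {mpoly K[n1]})
    (Q : {mpoly K[n2]}) :
    peval mul (relabel (lshift n2) P) (cat_fun x y) = peval mul P x /\
    peval mul (relabel (@rshift n1 n2) Q) (cat_fun x y) = peval mul Q y.
  rewrite !peval_relabel; split; apply: eq_peval => i.
    exact: cat_fun_lshift.
  exact: cat_fun_rshift.
split.
- exists 0%N, 0, (fun _ => 0).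
  by split; [rewrite /no_const mcoeff0 | case | rewrite peval0].
- move=> _ _ [n1 [P [x [P0 Sx ->]]]] [n2 [Q [y [Q0 Sy ->]]]].
  exists (n1 + n2)%N, (relabel (lshift n2) P + relabel (@rshift n1 n2) Q), (cat_fun x y).
  have [Px Qy] := cat_values _ _ x y P Q.
  split; [|exact: cat_funP|by rewrite pevalD Px Qy].
  by rewrite /no_const mcoeffD !mcoeff0_relabel P0 Q0 addr0.
- move=> a _ [n [P [x [P0 Sx ->]]]]; exists n, (a *: P), x.
  by split => //; [rewrite /no_const mcoeffZ P0 mulr0 | rewrite pevalZ].
- move=> _ _ [n1 [P [x [P0 Sx ->]]]] [n2 [Q [y [Q0 Sy ->]]]].
  exists (n1 + n2)%N, (relabel (lshift n2) P * relabel (@rshift n1 n2) Q), (cat_fun x y).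
  have [Px Qy] := cat_values _ _ x y P Q.
  have [P0' Q0'] : no_const (relabel (lshift n2) P) /\ no_const (relabel (@rshift n1 n2) Q).
    by rewrite /no_const !mcoeff0_relabel.
  split; [|exact: cat_funP|by rewrite pevalM // Px Qy].
  by rewrite /no_const rmorphM /= P0' Q0' mulr0.
Qed.

Lemma sub_gen S : S `<=` gen mul S.
Proof. by move=> s Ss Y [_ SY]; apply: SY. Qed.

Lemma gen_min S Y : subalgebra mul Y -> S `<=` Y -> gen mul S `<=` Y.
Proof. by move=> Ysub SY y; apply; split. Qed.

Lemma gen_subalgebra S : subalgebra mul (gen mul S).
Proof.
split=> [Y [[]]//|x y gx gy Y HY|a x gx Y HY|x y gx gy Y HY];
  have [[_ YD YZ YM] _] := HY.
- by apply: YD; [exact: gx | exact: gy].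
- by apply: YZ; exact: gx.
- by apply: YM; [exact: gx | exact: gy].
Qed.

Lemma gen_sub_poly_values S : gen mul S `<=` poly_values S.
Proof. exact: gen_min (poly_values_subalgebra S) (@sub_poly_values S). Qed.

Hypothesis mul_cont : continuous (fun p : X * X => mul p.1 p.2).

Lemma closure_subalgebra Y : subalgebra mul Y -> subalgebra mul (closure Y).
Proof.
move=> [Y0 YD YZ YM]; split.
- exact: subset_closure.
- exact: (closure_continuous2 (f := fun p : X * X => p.1 + p.2) add_continuous).
- move=> a x; apply: (closure_continuous2 (f := fun p : K^o * X => p.1 *: p.2)
    (A := setT) scale_continuous) => [c y _|]; [exact: YZ | exact: subset_closure].
- exact: (closure_continuous2 mul_cont).
Qed.

(** * Free dense copies *)

(* [Slot k l i n] indexes the element [e (l, i) + t *: e (l + 1, pi (k, i, n))]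
   of the [k]-th copy, [t] being small enough for the [n]-th neighbourhood of [0]. *)
Record slot (I : Type) :=
  Slot { slot_copy : I; slot_level : nat; slot_elt : I; slot_nbhd : nat }.

Section Copies.
Variables (I : Type) (F : set X) (e : nat * I -> X) (pi : I * I * nat -> I).
Variable scale : slot I -> K.
Hypotheses (F_free : SFG mul F) (e_inj : injective e) (eF : forall lj, F (e lj)).
Hypotheses (pi_inj : injective pi) (scale_neq0 : forall q, scale q != 0).

Definition base_idx (q : slot I) := (slot_level q, slot_elt q).
Definition partner_idx (q : slot I) :=
  ((slot_level q).+1, pi (slot_copy q, slot_elt q, slot_nbhd q)).
Definition pgen (q : slot I) := e (base_idx q) + scale q *: e (partner_idx q).

Lemma partner_idx_inj : injective partner_idx.
Proof.
by move=> [k l i n] [k' l' i' n'] [-> /pi_inj[-> -> ->]].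
Qed.

(* [e_poly p l j] expresses [e (l, j)] through the [pgen (p k)], solving
   [pgen q = e (base_idx q) + scale q *: e (partner_idx q)] for the partner,
   downwards in the level; it is [0] when [e (l, j)] is no partner. *)
Fixpoint e_poly_rec n (p : 'I_n -> slot I) (l : nat) (j : I) : {mpoly K[n]} :=
  if l is l'.+1 then
    if [pick k | `[< partner_idx (p k) = (l, j) >]] is Some k
    then (scale (p k))^-1 *: ('X_k - e_poly_rec p l' (slot_elt (p k)))
    else 0
  else 0.

Definition e_poly n (p : 'I_n -> slot I) (lj : nat * I) := e_poly_rec p lj.1 lj.2.

Lemma e_polyE n (p : 'I_n -> slot I) k : injective p ->
  'X_k = e_poly p (base_idx (p k)) + scale (p k) *: e_poly p (partner_idx (p k)).
Proof.
move=> pinj; rewrite /e_poly /=; case: pickP => [k' /asboolP/partner_idx_inj/pinj ->|].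
  by rewrite scalerA mulfV // scale1r addrC subrK.
by move=> /(_ k); rewrite asboolT.
Qed.

Definition perturb n m (p : 'I_n -> slot I) (g : 'I_(n + n) -> 'I_m) :
    n.-tuple {mpoly K[m]} :=
  [tuple 'X_(g (lshift n i)) + scale (p i) *: 'X_(g (rshift n i)) | i < n].

Lemma perturbK n m (p : 'I_n -> slot I) (g : 'I_(n + n) -> 'I_m) (d : 'I_m -> nat * I)
    (P : {mpoly K[n]}) : injective p ->
  (forall i, d (g (lshift n i)) = base_idx (p i)) ->
  (forall i, d (g (rshift n i)) = partner_idx (p i)) ->
  (P \mPo perturb p g) \mPo [tuple e_poly p (d j) | j < m] = P.
Proof.
move=> pinj dl dr; rewrite comp_mpolyA -[RHS]comp_mpoly_id; congr comp_mpoly.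
apply: eq_from_tnth => i; rewrite !tnth_mktuple comp_mpolyD comp_mpolyZ !comp_mpolyXU.
by rewrite -!tnth_nth !tnth_mktuple dl dr -e_polyE.
Qed.

Lemma peval_perturb n m (p : 'I_n -> slot I) (g : 'I_(n + n) -> 'I_m) (v : 'I_m -> X)
    (P : {mpoly K[n]}) :
  (forall i, v (g (lshift n i)) = e (base_idx (p i))) ->
  (forall i, v (g (rshift n i)) = e (partner_idx (p i))) ->
  peval mul (P \mPo perturb p g) v = peval mul P (fun i => pgen (p i)) /\
  (P \mPo perturb p g)@_0 = P@_0.
Proof.
move=> vl vr.
have M0 i : no_const (tnth (perturb p g) i).
  by rewrite /no_const tnth_mktuple mcoeffD mcoeffZ !(no_constXU _) mulr0 addr0.
have [-> ->] := peval_comp P v M0; split=> //.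
by apply: eq_peval => i; rewrite tnth_mktuple pevalD pevalZ !pevalXU vl vr.
Qed.

Lemma pgen_free n (P : {mpoly K[n]}) (p : 'I_n -> slot I) :
  injective p -> no_const P -> P != 0 -> peval mul P (fun i => pgen (p i)) != 0.
Proof.
move=> pinj P0 Pn0.
have [m [v [g [vinj vg vx]]]] :=
  injective_factor (cat_fun (fun i => e (base_idx (p i))) (fun i => e (partner_idx (p i)))).
have [d dE] : {d : 'I_m -> nat * I & forall j, e (d j) = v j}.
  apply: (@choice _ _ (fun j lj => e lj = v j)) => j; have [i ->] := vx j.
  by apply: (cat_funP (P := fun y => exists lj, e lj = y)) => i'; eexists.
have vl i : v (g (lshift n i)) = e (base_idx (p i)) by rewrite vg cat_fun_lshift.
have vr i : v (g (rshift n i)) = e (partner_idx (p i)) by rewrite vg cat_fun_rshift.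
have [Pv Q0] := @peval_perturb n m p g v P vl vr.
rewrite -Pv; apply: F_free => //.
- by rewrite /no_const Q0.
- apply: contra_neq Pn0 => Q_0.
  rewrite -(@perturbK _ _ p g d P pinj) ?Q_0 ?comp_mpoly0 // => i; apply: e_inj.
    by rewrite dE vl.
  by rewrite dE vr.
- by move=> j; rewrite -dE.
Qed.

Lemma pgen_inj : injective pgen.
Proof.
move=> q1 q2 q12; apply: boolp.contrapT => q1Nq2.
pose p (j : 'I_2) := if j == ord0 then q1 else q2.
have pinj : injective p.
  have ord2 (j : 'I_2) : j != ord0 -> j = lift ord0 ord0.
    by case: j => [[|[|j]] //= ?] _; apply: val_inj.
  move=> j j'; rewrite /p.
  have [->|/ord2->] := eqVneq j ord0; have [->|/ord2->] := eqVneq j' ord0 => //= E;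
    by case: q1Nq2; rewrite E.
pose P : {mpoly K[2]} := 'X_ord0 - 'X_(lift ord0 ord0).
have P0 : no_const P by rewrite /no_const mcoeffB !(no_constXU _) subr0.
have Pn0 : P != 0.
  apply/negP => /eqP /(congr1 (meval (fun j : 'I_2 => (j == ord0)%:R))).
  by rewrite mevalB !mevalXU meval0 /= subr0 => /eqP; rewrite oner_eq0.
by have := pgen_free pinj P0 Pn0; rewrite pevalB !pevalXU /p /= q12 subrr eqxx.
Qed.

Definition copy_gens (k : I) : set X := pgen @` [set q | slot_copy q = k].

Lemma copy_gensP k n (x : 'I_n -> X) : (forall i, copy_gens k (x i)) ->
  exists2 p : 'I_n -> slot I, (forall i, slot_copy (p i) = k) & x =1 pgen \o p.
Proof.
move=> xk; have [p pP] := @choice _ _ (fun i q => slot_copy q = k /\ pgen q = x i)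
  (fun i => let: ex_intro2 q qk qx := xk i in ex_intro _ q (conj qk qx)).
by exists p => i; have [? ?] := pP i.
Qed.

Lemma copy_gens_free k : SFG mul (copy_gens k).
Proof.
move=> n P x P0 Pn0 xinj /copy_gensP[p _ xp].
rewrite (eq_peval _ xp); apply: pgen_free => // i j pij.
by apply: xinj; rewrite !xp /= pij.
Qed.

Lemma copy_gen_disjoint k1 k2 y : k1 <> k2 ->
  gen mul (copy_gens k1) y -> gen mul (copy_gens k2) y -> y = 0.
Proof.
move=> k12 /gen_sub_poly_values/poly_values_inj[n1 [P1 [x1 [P10 x1inj x1k ->]]]].
move=> /gen_sub_poly_values/poly_values_inj[n2 [P2 [x2 [P20 x2inj x2k E]]]].
have [p1 pk1 xp1] := copy_gensP x1k; have [p2 pk2 xp2] := copy_gensP x2k.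
have pinj : injective (cat_fun p1 p2).
  apply: cat_fun_inj => [i j pij|i j pij|i j pij].
  - by apply: x1inj; rewrite !xp1 /= pij.
  - by apply: x2inj; rewrite !xp2 /= pij.
  - by apply: k12; rewrite -(pk1 i) -(pk2 j) pij.
(* [R] vanishes at the joint family, hence [R = 0]; evaluating [R] at
   [(x1, 0)] then gives [y = P1(x1) = P2(0) = 0]. *)
pose R := relabel (lshift n2) P1 - relabel (@rshift n1 n2) P2.
have R0 : no_const R by rewrite /no_const mcoeffB !mcoeff0_relabel P10 P20 subr0.
have R_0 : R = 0.
  apply: boolp.contrapT => /eqP Rn0; have := pgen_free pinj R0 Rn0.
  rewrite pevalB !peval_relabel (eq_peval P1 (y := x1)) ?(eq_peval P2 (y := x2)).
  - by rewrite E subrr eqxx.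
  - by move=> i; rewrite cat_fun_rshift xp2.
  - by move=> i; rewrite cat_fun_lshift xp1.
have := congr1 (fun R => peval mul R (cat_fun x1 (fun _ => 0))) R_0.
rewrite /= peval0 pevalB !peval_relabel.
by rewrite (eq_peval _ (cat_fun_lshift _ _)) (eq_peval _ (cat_fun_rshift _ _)) peval_at0 subr0.
Qed.

Lemma copy_gens_card k : infinite_set [set: I] -> copy_gens k #= [set: I].
Proof.
move=> Iinf; apply: card_eq_trans (inj_card_eq (in2W pgen_inj)) _.
have natI : [set: nat] #<= [set: I] := (infiniteP _).1 Iinf.
apply: Cantor_Bernstein.
  pose coords (q : slot I) := (slot_level q, slot_elt q, slot_nbhd q).
  apply: card_le_trans (infinite_card_le_setX Iinf
    (infinite_card_le_setX Iinf natI (card_lexx _)) natI).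
  apply: (@card_le_inj _ _ _ _ coords) => // -[k1 l1 i1 n1] [k2 l2 i2 n2].
  by rewrite !inE /= => -> -> [-> -> ->].
by apply: (@card_le_inj _ _ _ _ (fun i => Slot k 0 i 0)) => // i j _ _ [].
Qed.

Lemma copy_gens_sub_gen k : copy_gens k `<=` gen mul F.
Proof.
move=> _ [q _ <-]; have [_ genD genZ _] := gen_subalgebra F.
by apply: genD; [|apply: genZ]; apply: sub_gen; exact: eF.
Qed.

Variable B : nat -> set X.
Hypothesis B_base : forall U, nbhs 0 U -> exists n, B n `<=` U.
Hypothesis scale_small : forall q, B (slot_nbhd q) (scale q *: e (partner_idx q)).
Hypothesis e_surj : F `<=` range e.

Lemma e_closure_copy_gen k lj : closure (gen mul (copy_gens k)) (e lj).
Proof.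
case: lj => l i V; rewrite -[e _]addr0 => /(@add_continuous _ (e (l, i), 0)).
move=> [[V1 V2] /= [V1e V20] V12]; have [n Bn] := B_base V20.
exists (pgen (Slot k l i n)); split; first by apply: sub_gen; exists (Slot k l i n).
apply: (V12 (e (l, i), scale (Slot k l i n) *: e (partner_idx (Slot k l i n)))).
by split=> /=; [exact: nbhs_singleton | apply: Bn; exact: (scale_small (Slot k l i n))].
Qed.

Lemma copy_gen_dense k : dense (gen mul F) -> dense (gen mul (copy_gens k)).
Proof.
move=> F_dense; apply: dense_closure F_dense _.
apply: gen_min; first exact/closure_subalgebra/gen_subalgebra.
by move=> _ /e_surj[lj _ <-]; exact: e_closure_copy_gen.
Qed.

Lemma copies_dense_algebrable (M : set X) : infinite_set [set: I] ->
  dense (gen mul F) -> gen mul F `<=` M `|` [set 0] ->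
  infinitely_strongly_dense_algebrable mul I M.
Proof.
move=> Iinf F_dense FM; exists (fun k => gen mul (copy_gens k)); split.
  move=> k; split; last split.
  - by exists (copy_gens k); split; [exact: copy_gens_free | split; [exact: copy_gens_card|]].
  - exact: copy_gen_dense.
  - exact: subset_trans (gen_min (gen_subalgebra F) (@copy_gens_sub_gen k)) FM.
move=> k1 k2 k12; apply/seteqP; split => [y [g1 g2]|_ ->].
  by rewrite (copy_gen_disjoint k12 g1 g2).
by split; [case: (gen_subalgebra (copy_gens k1)) | case: (gen_subalgebra (copy_gens k2))].
Qed.

End Copies.

End CommutativeAlgebra.

Theorem theorem4p7 (R : realType) (b : bool) (I : Type)
  (X : topologicalLmodType (scalarK R b)) (mul : X -> X -> X) (M : set X) :
  infinite_set [set: I] ->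
  comm_top_algebra mul ->
  alpha_generated mul I ->
  first_countable X ->
  (infinitely_strongly_dense_algebrable mul I M <->
   strongly_dense_algebrable mul I M).
Proof.
move=> Iinf [mulA mulC mulL mul_cont] _ X_fc; split.
  by move=> [Y [YP _]]; have [k _] := infinite_setN0 Iinf; exists (Y k); exact: YP.
move=> [_ [[F [F_free [FI ->]]] [F_dense FM]]].
have [i0 _] := infinite_setN0 Iinf.
have natI : [set: nat] #<= [set: I] := (infiniteP _).1 Iinf.
have [e [eF e_inj e_surj]] : exists e : nat * I -> X, set_bij [set: nat * I] F e.
  by apply: (card_eq_bij 0); exact: card_eq_trans (infinite_card_natX Iinf) (card_esym FI).
have [pi _ pi_inj] := card_le_fun i0 (infinite_card_le_setX Iinf
  (infinite_card_le_setX Iinf (card_lexx _) (card_lexx _)) natI).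
have [B [B0 B_base]] := X_fc 0.
have [scale scaleP] := choice (fun q : slot I =>
  nbhs0_scale_neq0 (e (partner_idx pi q)) (B0 (slot_nbhd q))).
apply: (@copies_dense_algebrable _ _ mul mulA mulC mulL mul_cont I F e pi scale
  F_free _ (fun lj => eF lj Logic.I) _ _ B B_base) => //.
- by move=> x y; apply: e_inj; rewrite in_setT.
- by move=> x y; apply: pi_inj; rewrite in_setT.
- by move=> q; case: (scaleP q).
- by move=> q; case: (scaleP q).
Qed.
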